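(* Define $H:\mathbb{N}^+\cup\{\bot\}\to\mathbb{N}^+\cup\{\bot\}$ by $H(\bot)=\bot$, $H(n)=3n/4$ if $n\equiv0\pmod4$, $H(n)=(9n+1)/8$ if $n\equiv7\pmod 8$, and $H(n)=\bot$ otherwise. Then every $H$-trajectory $(n,H(n),H^2(n),\dots)$ with $n\in\mathbb{N}^+$ contains $\bot$ if and only if every Collatz trajectory that does not contain $1$ contains some element $m$ with $m\equiv5\pmod8$ or $m\equiv7\pmod8$.
   Context: $C:\mathbb{N}^+\to\mathbb{N}^+$ is the Collatz function $C(n)=n/2$ for $n$ even and $C(n)=3n+1$ for $n$ odd; the Collatz trajectory of $n$ is $(n,C(n),C^2(n),\dots)$. *)

From mathcomp Require Import all_boot.
Set Implicit Arguments. Unset Strict Implicit. Unset Printing Implicit Defensive.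

(* Collatz function C(n) = n/2 (n even), 3n+1 (n odd), on nat; only applied to n >= 1. *)
Definition collatz (n : nat) : nat := if odd n then 3 * n + 1 else n %/ 2.

(* The map H on N+ ∪ {⊥}, with ⊥ represented by None. *)
Definition H (x : option nat) : option nat :=
  match x with
  | None => None
  | Some n =>
      if n %% 4 == 0 then Some (3 * n %/ 4)
      else if n %% 8 == 7 then Some ((9 * n + 1) %/ 8)
      else None
  end.

From mathcomp Require Import all_boot.
From mathcomp Require Import zify.
From Stdlib Require Import Classical.

Set Implicit Arguments.
Unset Strict Implicit.
Unset Printing Implicit Defensive.

(* The proof conjugates H into the Collatz map through x |-> 6x + 1.  Call a
   number "good" when it is not 1 and not congruent to 5 or 7 modulo 8.
   - If H x = y, the Collatz trajectory of 6x + 1 reaches 6y + 1 after 3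
     steps (x = 0 mod 4) or 5 steps (x = 7 mod 8), through good numbers only
     (lemma [H_step]); if H x = ⊥, the trajectory of 6x + 1 meets a number
     that is 5 or 7 modulo 8 within two steps (lemma [H_step_bot]).
   - Every Collatz trajectory of good numbers starting from N > 0 reaches a
     number 6x + 1 with x > 0 (lemma [reach_six]).
   Hence an H-trajectory avoiding ⊥ from x yields an all-good Collatz
   trajectory from 6x + 1, and an all-good Collatz trajectory yields an
   H-trajectory avoiding ⊥; the two sides of the equivalence are the
   contrapositives of these facts. *)

Definition bad_residue (m : nat) : bool := (m %% 8 == 5) || (m %% 8 == 7).

Definition good (m : nat) : bool := (m != 1) && ~~ bad_residue m.

Definition good_trajectory (N : nat) : Prop := forall i, good (iter i collatz N).

Definition avoids_bot (x : nat) : Prop := forall k, iter k H (Some x) <> None.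

(* One Collatz step, as a boolean arithmetic condition that [lia] understands. *)
Lemma collatz_eqE n m :
  (collatz n == m) =
  ((n %% 2 == 1) && (m == 3 * n + 1)) || ((n %% 2 == 0) && (n == 2 * m)).
Proof. by rewrite /collatz modn2; case: (odd n) (odd_double_half n) => /= e; lia. Qed.

Lemma fpath_segment (T : eqType) (f : T -> T) x p : fpath f x p ->
  iter (size p) f x = last x p /\ traject f x (size p) = belast x p.
Proof.
move=> /fpathE def_p; split; first by rewrite def_p last_traject size_traject.
have := trajectSr f x (size p).
by rewrite trajectS -def_p lastI => /rcons_inj [].
Qed.

Lemma reach_odd N : 0 < N -> exists j, odd (iter j collatz N).
Proof.
elim/ltn_ind: N => N IH hN.
case hodd: (odd N); first by exists 0.
have hstep : collatz N = N %/ 2 by rewrite /collatz hodd.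
have heven : N %% 2 = 0 by rewrite modn2 hodd.
have [||j hj] := IH (N %/ 2); [lia | lia | by exists j.+1; rewrite iterSr hstep].
Qed.

(* A good Collatz trajectory from N > 0 passes through some 6x + 1, x > 0:
   a good odd value is 1 or 3 mod 8, a value 3 mod 8 leads in two steps to
   one that is 1 mod 8, and 8a + 1 leads in three steps to 6a + 1. *)
Lemma reach_six N : 0 < N -> good_trajectory N ->
  exists j x, 0 < x /\ iter j collatz N = 6 * x + 1.
Proof.
move=> hN hgood; have [j hodd] := reach_odd hN.
have [i hi] : exists i, iter i collatz N %% 8 = 1.
  have := hgood j; rewrite /good /bad_residue.
  case: (boolP (iter j collatz N %% 8 == 1)) => [/eqP|] h1 hj; first by exists j.
  set o := iter j collatz N in hodd h1 hj *.
  have ho : o %% 2 = 1 by rewrite modn2 hodd.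
  have hp : fpath collatz o [:: 3 * o + 1; (3 * o + 1) %/ 2].
    by rewrite /= !collatz_eqE; lia.
  have [hit _] := fpath_segment hp.
  exists (2 + j); have := hgood (2 + j).
  by rewrite iterD hit /good /bad_residue /=; lia.
set m := iter i collatz N in hi.
have hm1 : m != 1 by have := hgood i; rewrite /good => /andP[].
have hp : fpath collatz m [:: 3 * m + 1; (3 * m + 1) %/ 2; 6 * (m %/ 8) + 1].
  by rewrite /= !collatz_eqE; lia.
have [hit _] := fpath_segment hp.
by exists (3 + i), (m %/ 8); rewrite iterD hit /=; split => //; lia.
Qed.

Lemma good_trajectory_iter N j :
  good_trajectory N -> good_trajectory (iter j collatz N).
Proof. by move=> hgood i; rewrite -iterD. Qed.

Lemma H_step x y : 0 < x -> H (Some x) = Some y ->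
  [/\ 0 < y & exists2 j, 0 < j &
    iter j collatz (6 * x + 1) = 6 * y + 1 /\
    all good (traject collatz (6 * x + 1) j)].
Proof.
move=> hx /=; case: ifP => [/eqP h4 [<-]|_].
  have hp : fpath collatz (6 * x + 1)
      [:: 18 * x + 4; 9 * x + 2; 6 * (3 * x %/ 4) + 1].
    by rewrite /= !collatz_eqE; lia.
  have [hit htr] := fpath_segment hp.
  split; [lia | exists 3 => //]; rewrite hit htr /= /good /bad_residue; lia.
case: ifP => [/eqP h7 [<-]|] //.
have hp : fpath collatz (6 * x + 1)
    [:: 18 * x + 4; 9 * x + 2; 27 * x + 7; (27 * x + 7) %/ 2;
        6 * ((9 * x + 1) %/ 8) + 1].
  by rewrite /= !collatz_eqE; lia.
have [hit htr] := fpath_segment hp.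
split; [lia | exists 5 => //]; rewrite hit htr /= /good /bad_residue; lia.
Qed.

(* If H x = ⊥, the trajectory of 6x + 1 meets a number 5 or 7 mod 8: either
   6x + 1 itself (x = 1, 2 mod 4) or 9x + 2 (x = 3 mod 8). *)
Lemma H_step_bot x : H (Some x) = None ->
  exists k, bad_residue (iter k collatz (6 * x + 1)).
Proof.
rewrite /=; case: ifP => // /eqP h4; case: ifP => // /eqP h7 _.
case: (boolP (x %% 8 == 3)) => [/eqP h3|h3]; last first.
  by exists 0; rewrite /bad_residue /=; lia.
have hp : fpath collatz (6 * x + 1) [:: 18 * x + 4; 9 * x + 2].
  by rewrite /= !collatz_eqE; lia.
have [hit _] := fpath_segment hp.
by exists 2; rewrite hit /bad_residue /=; lia.
Qed.

(* An all-good Collatz trajectory from 6x + 1 forces the H-trajectory of x to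
   avoid ⊥: every iterate is some positive y, and 6y + 1 again has an all-good
   trajectory. *)
Lemma H_defined_of_good x : 0 < x -> good_trajectory (6 * x + 1) ->
  forall k, exists2 y, 0 < y & iter k H (Some x) = Some y.
Proof.
move=> hx hgood k; elim: k x hx hgood => [|k IH] x hx hgood; first by exists x.
rewrite iterSr; case hHx: (H (Some x)) => [y|].
  have [hy [j _ [hj _]]] := H_step hx hHx.
  by apply: IH => //; rewrite -hj; apply: good_trajectory_iter.
have [i hi] := H_step_bot hHx.
by have := hgood i; rewrite /good hi andbF.
Qed.

(* Conversely, if the H-trajectory of x avoids ⊥, the Collatz trajectory of
   6x + 1 is good; by strong induction on the position i, cutting off the
   first simulated H-step. *)
Lemma good_of_avoids_bot x : 0 < x -> avoids_bot x -> good_trajectory (6 * x + 1).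
Proof.
move=> hx hav i; elim/ltn_ind: i x hx hav => i IH x hx hav.
case hHx: (H (Some x)) (hav 1) => [y|] // _.
have [hy [j hj0 [hj hall]]] := H_step hx hHx.
case: (ltnP i j) => hij.
  by apply: (allP hall); apply/trajectP; exists i.
have -> : i = (i - j) + j by rewrite subnK.
rewrite iterD hj; apply: IH => [|//|k]; first lia.
by rewrite -hHx -iterSr; apply: hav.
Qed.

Theorem mainTheorem18 :
  (forall n : nat, 0 < n -> exists k : nat, iter k H (Some n) = None) <->
  (forall n : nat, 0 < n -> (forall k : nat, iter k collatz n <> 1) ->
     exists k : nat, iter k collatz n %% 8 = 5 \/ iter k collatz n %% 8 = 7).
Proof.
split=> [hH N hN hnot1 | hC n hn].
- apply: NNPP => hres.
  have hgood : good_trajectory N.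
    move=> i; have := hnot1 i; rewrite /good /bad_residue => h.
    by apply/andP; split; [apply/eqP | apply/negP => hb; apply: hres; exists i; lia].
  have [j [x [hx hj]]] := reach_six hN hgood.
  have hgood_x : good_trajectory (6 * x + 1).
    by rewrite -hj; apply: good_trajectory_iter.
  have [k hk] := hH x hx.
  have [y _ hy] := H_defined_of_good hx hgood_x k.
  by rewrite hy in hk.
- apply: NNPP => hnone.
  have hav : avoids_bot n by move=> k hk; apply: hnone; exists k.
  have hgood := good_of_avoids_bot hn hav.
  have [||k hk] := hC (6 * n + 1); first lia.
    by move=> k hk; have := hgood k; rewrite /good hk.
  by have := hgood k; rewrite /good /bad_residue; lia.
Qed.
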